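(* Let $\Gamma$ be a connected locally finite graph with at most countably many vertices, $G<\mathrm{Aut}(\Gamma)$, and $G_1\supset G_2\supset\cdots$ a decreasing sequence of closed normal subgroups of $G$ with $G/G_i$ amenable and $\bigcap_i G_i=\{1\}$. Let $\pi_i:\Gamma\to\Gamma/G_i$ be the quotient maps and let $D_1\subset D_2\subset\cdots$ be connected subgraphs of $\Gamma$ with $\bigcup_i D_i=\Gamma$ such that $\pi_i$ restricted to the edge set of $D_i$ is a bijection onto the edge set of $\Gamma/G_i$. For each $i$ let $\mathcal{G}_i$ be a random subgraph (random subset of edges) of $\Gamma/G_i$, let $\tilde{\mathcal{G}}_i=\pi_i^{-1}(\mathcal{G}_i)$, and let $\hat{\mathcal{G}}_i$ be the random subgraph of $\Gamma$ contained in $D_i$ that agrees with $\tilde{\mathcal{G}}_i$ on $D_i$ (i.e. $\hat{\mathcal{G}}_i=\tilde{\mathcal{G}}_i\cap E(D_i)$). Let $\mathcal{G}$ be a random subgraph of $\Gamma$. Then $\tilde{\mathcal{G}}_i\to\mathcal{G}$ in the weak* sense if and only if $\hat{\mathcal{G}}_i\to\mathcal{G}$ in the weak* sense.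
   Context: The quotient graph $\Gamma/G_i$ has as vertices the $G_i$-orbits of vertices of $\Gamma$, and for each $G_i$-orbit $[e]$ of edges of $\Gamma$ with endpoints in orbits $[v],[w]$ it has an edge $[e]$ joining $[v]$ and $[w]$; $\pi_i$ sends vertices and edges to their orbits. Random subgraphs of $\Gamma$ are random elements of $2^{E(\Gamma)}$ (product topology); $\mathcal{G}_i\to\mathcal{G}$ weak* means the laws converge in the weak* topology on Borel probability measures on $2^{E(\Gamma)}$, equivalently $\Pr(B\subset\mathcal{G}_i)\to\Pr(B\subset\mathcal{G})$ for every finite $B\subset E(\Gamma)$. *)

From HB Require Import structures.
From mathcomp Require Import all_boot all_order all_algebra.
From mathcomp Require Import all_classical all_reals all_analysis.

Set Implicit Arguments.
Unset Strict Implicit.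
Unset Printing Implicit Defensive.

Import Order.TTheory GRing.Theory Num.Theory.
Local Open Scope classical_set_scope.
Local Open Scope ring_scope.

(* Graphs.  A (multi)graph Gamma has vertex type V, edge type E and an  *)
(* endpoint map ends : E -> V * V (the order of the pair is irrelevant: *)
(* the endpoint set of e is {(ends e).1, (ends e).2}).                   *)

Definition endset {V E : Type} (ends : E -> V * V) (e : E) : set V :=
  [set (ends e).1; (ends e).2].

Definition adj_in {V E : Type} (ends : E -> V * V) (A : set E) (u v : V) : Prop :=
  exists e, A e /\ (ends e = (u, v) \/ ends e = (v, u)).

Inductive reach {V : Type} (r : V -> V -> Prop) : V -> V -> Prop :=
  | reach_refl x : reach r x x
  | reach_step x y z : r x y -> reach r y z -> reach r x z.

Definition graph_connected {V E : Type} (ends : E -> V * V) : Prop :=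
  forall u v : V, reach (adj_in ends setT) u v.

Definition locally_finite {V E : Type} (ends : E -> V * V) : Prop :=
  forall v : V, finite_set [set e | endset ends e v].

Definition connected_subgraph {V E : Type} (ends : E -> V * V)
  (DV : set V) (DE : set E) : Prop :=
  (forall e, DE e -> endset ends e `<=` DV) /\
  (forall u v, DV u -> DV v -> reach (adj_in ends DE) u v).

Definition aut (V E : Type) := ((V -> V) * (E -> E))%type.

Definition acomp {V E : Type} (g h : aut V E) : aut V E := (g.1 \o h.1, g.2 \o h.2).

Definition aid {V E : Type} : aut V E := (id, id).

Definition is_aut {V E : Type} (ends : E -> V * V) (g : aut V E) : Prop :=
  bijective g.1 /\ bijective g.2 /\
  forall e, endset ends (g.2 e) = g.1 @` endset ends e.

Definition is_subgroup {V E : Type} (H : set (aut V E)) : Prop :=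
  H aid /\
  (forall g h, H g -> H h -> H (acomp g h)) /\
  (forall g, H g -> exists h, H h /\ acomp h g = aid /\ acomp g h = aid).

Definition normal_in {V E : Type} (G N : set (aut V E)) : Prop :=
  forall g n h, G g -> N n -> G h -> acomp h g = aid ->
    N (acomp (acomp g n) h).

Definition agree_on {V E : Type} (FV : set V) (FE : set E) (g h : aut V E) : Prop :=
  (forall v, FV v -> g.1 v = h.1 v) /\ (forall e, FE e -> g.2 e = h.2 e).

(* N is closed in G for the topology of pointwise convergence on the
   (discrete) sets of vertices and edges *)
Definition closed_in {V E : Type} (G N : set (aut V E)) : Prop :=
  forall g, G g ->
    (forall (FV : set V) (FE : set E), finite_set FV -> finite_set FE ->
       exists n, N n /\ agree_on FV FE g n) ->
    N g.

(* Bounded right-uniformly continuous functions on the topological group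
   G/N, viewed as N-invariant functions on G.  A basic neighbourhood of 1
   in G is the pointwise stabiliser of a finite window (FV, FE); right
   uniform continuity: |f(u y) - f(y)| < eps for u in that neighbourhood. *)
Definition rucb_quot {R : realType} {V E : Type} (G N : set (aut V E))
  (f : aut V E -> R) : Prop :=
  (exists M : R, forall x, G x -> `|f x| <= M) /\
  (forall x n, G x -> N n -> f (acomp x n) = f x) /\
  (forall eps : R, 0 < eps -> exists (FV : set V) (FE : set E),
     finite_set FV /\ finite_set FE /\
     forall u y, G u -> G y -> agree_on FV FE u aid ->
       `|f (acomp u y) - f y| < eps).

Definition amenable_quot {R : realType} {V E : Type} (G N : set (aut V E)) : Prop :=
  exists m : (aut V E -> R) -> R,
    (forall f h (a b : R), rucb_quot G N f -> rucb_quot G N h ->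
       m (fun x => a * f x + b * h x) = a * m f + b * m h) /\
    (forall f, rucb_quot G N f -> (forall x, G x -> 0 <= f x) -> 0 <= m f) /\
    m (fun _ => 1) = 1 /\
    (forall f g, rucb_quot G N f -> G g -> m (fun x => f (acomp g x)) = m f).

(* Quotient graph Gamma/N: its edges are the N-orbits of edges.         *)

Definition orbitE {V E : Type} (N : set (aut V E)) (e : E) : set E :=
  [set g.2 e | g in N].

Definition qedge {V E : Type} (N : set (aut V E)) : Type :=
  {S : set E | exists e, S = orbitE N e}.

Definition pi_edge {V E : Type} (N : set (aut V E)) (e : E) : qedge N :=
  exist (fun S => exists e', S = orbitE N e') (orbitE N e) (ex_intro _ e erefl).

(* Weak* convergence of random subgraphs of Gamma (random subsets of E), *)
(* via the characterisation Pr(B \subset G_i) -> Pr(B \subset G) for all *)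
(* finite B \subset E (as in the paper's definition).                    *)

Definition cvg_weak_star {R : realType} {E : Type}
  {d : measure_display} {Omega : nat -> measurableType d}
  {d0 : measure_display} {Omega0 : measurableType d0}
  (P : forall i, probability (Omega i) R) (X : forall i, Omega i -> set E)
  (P0 : probability Omega0 R) (Y : Omega0 -> set E) : Prop :=
  forall B : set E, finite_set B ->
    (fun i => P i [set w | B `<=` X i w]) @ \oo --> P0 [set w | B `<=` Y w].

(** Every finite edge set B lies in D_i for all large i, because the D_i
    increase to E(Gamma); for such i the random sets pi_i^-1(G_i) and
    pi_i^-1(G_i) ∩ E(D_i) contain B on the same event, so the two sequences of
    probabilities Pr(B ⊆ .) eventually coincide and have the same limits. *)

From HB Require Import structures.
From mathcomp Require Import all_boot all_order all_algebra.
From mathcomp Require Import all_classical all_reals all_analysis.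
From mathcomp Require Import finmap.
Local Open Scope classical_set_scope.

Lemma finite_sub_bigcup_near (T : Type) (D : nat -> set T) (B : set T) :
  (forall n, D n `<=` D n.+1) -> finite_set B -> B `<=` \bigcup_n D n ->
  \forall n \near \oo, B `<=` D n.
Proof.
move=> /(homo_leq (@subset_refl _) (fun _ _ _ => @subset_trans _ _ _ _)) D_homo.
move=> /(@finite_fsetP {classic T}) [F ->] FD.
have D_near (x : {classic T}) : x \in F -> \forall n \near \oo, D n x.
  move=> /FD [k _ Dkx].
  by apply: filterS (nbhs_infty_ge k) => n /D_homo; apply.
exact: filter_bigI eventually_filter D_near.
Qed.

Lemma cvg_weak_star_near_eq (R : realType) (E : Type)
  (d : measure_display) (Omega : nat -> measurableType d)
  (d0 : measure_display) (Omega0 : measurableType d0)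
  (P : forall i, probability (Omega i) R) (X X' : forall i, Omega i -> set E)
  (P0 : probability Omega0 R) (Y : Omega0 -> set E) :
  (forall B, finite_set B -> \forall i \near \oo,
     P i [set w | B `<=` X i w] = P i [set w | B `<=` X' i w]) ->
  cvg_weak_star P X P0 Y <-> cvg_weak_star P X' P0 Y.
Proof.
move=> PXX'; split=> cvgX B finB; apply: cvg_trans (cvgX B finB).
  exact: near_eq_cvg (PXX' B finB).
by apply: near_eq_cvg; apply: filterS (PXX' B finB).
Qed.

Theorem lemma4p2 (R : realType) (V : countType) (E : Type) (ends : E -> V * V)
  (Gamma_conn : graph_connected ends) (Gamma_lf : locally_finite ends)
  (G : set (aut V E)) (HGaut : G `<=` is_aut ends) (HGsub : is_subgroup G)
  (Gi : nat -> set (aut V E))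
  (HGi : forall i, Gi i `<=` G /\ is_subgroup (Gi i) /\
                   normal_in G (Gi i) /\ closed_in G (Gi i))
  (HGdec : forall i, Gi i.+1 `<=` Gi i)
  (HGamen : forall i, @amenable_quot R V E G (Gi i))
  (HGtriv : forall g, (forall i, Gi i g) -> g = aid)
  (DV : nat -> set V) (DE : nat -> set E)
  (HDconn : forall i, connected_subgraph ends (DV i) (DE i))
  (HDinc : forall i, DV i `<=` DV i.+1 /\ DE i `<=` DE i.+1)
  (HDV : \bigcup_i DV i = setT) (HDE : \bigcup_i DE i = setT)
  (HDbij : forall i, set_bij (DE i) setT (pi_edge (Gi i)))
  (d : measure_display) (Omega : nat -> measurableType d)
  (P : forall i, probability (Omega i) R)
  (X : forall i, Omega i -> set (qedge (Gi i)))
  (HX : forall i (q : qedge (Gi i)), measurable [set w | X i w q])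
  (d0 : measure_display) (Omega0 : measurableType d0) (P0 : probability Omega0 R)
  (Y : Omega0 -> set E) (HY : forall e, measurable [set w | Y w e]) :
  cvg_weak_star P (fun i w => pi_edge (Gi i) @^-1` X i w) P0 Y <->
  cvg_weak_star P (fun i w => (pi_edge (Gi i) @^-1` X i w) `&` DE i) P0 Y.
Proof.
apply: cvg_weak_star_near_eq => B finB.
have BDE : B `<=` \bigcup_i DE i by rewrite HDE.
near=> i.
have BDEi : B `<=` DE i.
  by near: i; exact: finite_sub_bigcup_near (fun i => (HDinc i).2) finB BDE.
congr (P i _); apply/seteqP; split=> w /=; rewrite subsetI.
- by move=> BX; split.
- by case.
Unshelve. all: by end_near.
Qed.
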